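(* Let $\psi \subseteq \mathbb{N}$ be an undecidable property of generators, and let $L_0 \subseteq L_1 \subseteq L_2 \subseteq \cdots$ be a countable (but not computably enumerable) sequence of languages, each $L_i \subseteq \mathbb{N}$ decidable, such that (1) every $p \in L_i$ satisfies $\psi(p)$, for each $i$; and (2) $\bigcup_{i \in \mathbb{N}} L_i = \psi$. Then $\lim_{i \to \infty} C(L_i) = \infty$.
   Context: Programs (generators) are identified with natural numbers in a fixed universal programming language. For a decidable set $L_i$, $C(L_i)$ denotes the length of the shortest program deciding $L_i$. *)

(* A concrete fixed universal programming language:
   counter (Minsky) machines, with programs coded as natural numbers. *)
From Stdlib Require Import Arith List Cantor.
Import ListNotations.

(* Instructions: INC r ; JZDEC r j (if reg r = 0 jump to j, else decrement
   and continue). *)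
Inductive instr : Type :=
| INC : nat -> instr
| JZDEC : nat -> nat -> instr.

Definition decode_instr (a : nat) : instr :=
  if Nat.even a then INC (Nat.div2 a)
  else let '(r, j) := Cantor.of_nat (Nat.div2 a) in JZDEC r j.

(* Decoding of a program code into a list of instructions:
   0 is the empty program, S n codes (instr a :: rest b) with (a,b) = of_nat n.
   Every natural number is a program. *)
Fixpoint decode_aux (fuel n : nat) : list instr :=
  match fuel with
  | 0 => []
  | S f => match n with
           | 0 => []
           | S m => let '(a, b) := Cantor.of_nat m in
                    decode_instr a :: decode_aux f b
           end
  end.

Definition decode (p : nat) : list instr := decode_aux (S p) p.

Definition regs := nat -> nat.
Definition upd (s : regs) (r v : nat) : regs :=
  fun k => if Nat.eqb k r then v else s k.

Fixpoint run (prog : list instr) (fuel pc : nat) (s : regs) : option nat :=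
  match nth_error prog pc with
  | None => Some (s 0)
  | Some i =>
      match fuel with
      | 0 => None
      | S f =>
          match i with
          | INC r => run prog f (S pc) (upd s r (S (s r)))
          | JZDEC r j =>
              match s r with
              | 0 => run prog f j s
              | S v => run prog f (S pc) (upd s r v)
              end
          end
      end
  end.

Definition exec (p x k : nat) : option nat :=
  run (decode p) k 0 (fun r => if Nat.eqb r 0 then x else 0).

Definition halts_with (p x out : nat) : Prop := exists k, exec p x k = Some out.

Definition language := nat -> Prop.

Definition decides (p : nat) (L : language) : Prop :=
  forall x, (L x -> halts_with p x 1) /\ (~ L x -> halts_with p x 0).

Definition decidable_lang (L : language) : Prop := exists p, decides p L.

Definition prog_length (p : nat) : nat := S (Nat.log2 p).

(* C(L) > B : every program deciding L has length greater than B
   (for decidable L this says exactly that the shortest decider has length > B). *)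
Definition C_gt (L : language) (B : nat) : Prop :=
  forall p, decides p L -> B < prog_length p.

Definition ce_sequence (L : nat -> language) : Prop :=
  exists e, forall i, exists q, halts_with e i q /\ decides q (L i).

(* If C(L_i) <= B for infinitely many i, then, as there are fewer than 2^B
   programs of length <= B, a single program p decides infinitely many L_i.
   Since the L_i increase to psi, every x in psi lies in some such L_i (so p
   accepts it) and every x outside psi lies in none (so p rejects it): p
   decides psi, contradicting its undecidability. *)
From Stdlib Require Import Arith Lia Classical.

Definition infinitely_often (P : nat -> Prop) : Prop :=
  forall N, exists i, N <= i /\ P i.

Lemma not_eventually_infinitely_often (P : nat -> Prop) :
  ~ (exists N, forall i, N <= i -> P i) -> infinitely_often (fun i => ~ P i).
Proof.
  intros Hnot N.
  apply NNPP; intros Hall; apply Hnot.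
  exists N; intros i Hi.
  apply NNPP; intros HPi; apply Hall.
  now exists i.
Qed.

Lemma infinitely_often_pigeonhole (P : nat -> nat -> Prop) (M : nat) :
  infinitely_often (fun i => exists p, p < M /\ P p i) ->
  exists p, p < M /\ infinitely_often (P p).
Proof.
  induction M as [|M IH]; intros Hinf.
  - destruct (Hinf 0) as [i [_ [p [Hp _]]]]; lia.
  - destruct (classic (infinitely_often (P M))) as [HM|HM].
    { exists M; split; [lia | exact HM]. }
    assert (HM' : exists N0, ~ exists i, N0 <= i /\ P M i).
    { now apply not_all_ex_not. }
    destruct HM' as [N0 HN0].
    destruct IH as [p [Hp HPp]].
    + intros N.
      destruct (Hinf (max N N0)) as [i [Hi [p [Hp HP]]]].
      exists i; split; [lia |].
      exists p; split; [| exact HP].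
      destruct (Nat.eq_dec p M) as [->|]; [| lia].
      exfalso; apply HN0; exists i; split; [lia | exact HP].
    + exists p; split; [lia | exact HPp].
Qed.

Lemma prog_length_le_lt_pow2 (p B : nat) : prog_length p <= B -> p < 2 ^ B.
Proof.
  unfold prog_length; intros Hlen.
  destruct p as [|p].
  - apply Nat.neq_0_lt_0, Nat.pow_nonzero; lia.
  - apply Nat.log2_lt_pow2; lia.
Qed.

Lemma not_C_gt_short_decider (L : language) (B : nat) :
  ~ C_gt L B -> exists p, p < 2 ^ B /\ decides p L.
Proof.
  intros Hnot.
  apply NNPP; intros Hnone; apply Hnot.
  intros p Hp.
  apply NNPP; intros Hlen; apply Hnone.
  exists p; split; [apply prog_length_le_lt_pow2; lia | exact Hp].
Qed.

Section IncreasingUnion.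

Variable psi : language.
Variable L : nat -> language.
Hypothesis Hmono : forall i x, L i x -> L (S i) x.
Hypothesis Hsub : forall i x, L i x -> psi x.
Hypothesis Hunion : forall x, psi x -> exists i, L i x.

Lemma increasing_le (j i x : nat) : j <= i -> L j x -> L i x.
Proof. intros Hji; induction Hji; auto. Qed.

Lemma decides_increasing_union (p : nat) :
  infinitely_often (fun i => decides p (L i)) -> decides p psi.
Proof.
  intros Hinf x; split.
  - intros Hx.
    destruct (Hunion x Hx) as [j Hj].
    destruct (Hinf j) as [i [Hji Hdec]].
    apply (proj1 (Hdec x)).
    now apply (increasing_le j).
  - intros Hx.
    destruct (Hinf 0) as [i [_ Hdec]].
    apply (proj2 (Hdec x)).
    intros Hi; apply Hx; now apply (Hsub i).
Qed.

End IncreasingUnion.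

Theorem mainTheorem11 (psi : language) (L : nat -> language)
  (Hpsi : ~ decidable_lang psi)
  (Hmono : forall i x, L i x -> L (S i) x)
  (Hnotce : ~ ce_sequence L)
  (Hdec : forall i, decidable_lang (L i))
  (Hsub : forall i p, L i p -> psi p)
  (Hunion : forall p, psi p -> exists i, L i p) :
  forall B : nat, exists N : nat, forall i : nat, N <= i -> C_gt (L i) B.
Proof.
  intros B.
  apply NNPP; intros Hnot.
  assert (Hshort : infinitely_often
                     (fun i => exists p, p < 2 ^ B /\ decides p (L i))).
  { intros N.
    destruct (not_eventually_infinitely_often _ Hnot N) as [i [Hi HC]].
    exists i; split; [exact Hi | now apply not_C_gt_short_decider]. }
  destruct (infinitely_often_pigeonhole _ _ Hshort) as [p [_ Hp]].
  apply Hpsi; exists p.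
  now apply (decides_increasing_union psi L).
Qed.
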